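(* Let $\mathbb K$ be $\mathbb R$ or $\mathbb C$ and let $(\mathcal P,\cdot,[\,,\,])$ be a transposed Poisson superalgebra over $\mathbb K$. Let $D:\mathcal P\to\mathcal P$ be an even derivation of the Lie superalgebra $(\mathcal P,[\,,\,])$, i.e. $D$ is linear, $|D(x)|=|x|$ and $D([x,y])=[D(x),y]+[x,D(y)]$ for homogeneous $x,y$. Then for all homogeneous $x,y,z\in\mathcal P$, $$D(x)\cdot D([y,z])+(-1)^{|x|(|y|+|z|)}D(y)\cdot D([z,x])+(-1)^{(|x|+|y|)|z|}D(z)\cdot D([x,y])$$ $$+\,x\cdot[D(y),D(z)]+(-1)^{|x|(|y|+|z|)}\,y\cdot[D(z),D(x)]+(-1)^{(|x|+|y|)|z|}\,z\cdot[D(x),D(y)]=0.$$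
   Context: A transposed Poisson superalgebra is a triple $(\mathcal P,\cdot,[\,,\,])$ where $\mathcal P=\mathcal P_0\oplus\mathcal P_1$ is a super vector space over $\mathbb K$, $(\mathcal P,\cdot)$ is a commutative associative superalgebra, $(\mathcal P,[\,,\,])$ is a Lie superalgebra, and for all homogeneous $x,y,z\in\mathcal P$ one has $2\,z\cdot[x,y]=[z\cdot x,y]+(-1)^{|x||z|}[x,z\cdot y]$. Here $|x|\in\mathbb Z_2$ denotes the parity of a homogeneous element. *)

From HB Require Import structures.
From mathcomp Require Import all_boot all_order all_algebra.
Set Implicit Arguments. Unset Strict Implicit. Unset Printing Implicit Defensive.
Import Order.TTheory GRing.Theory Num.Theory.
Local Open Scope ring_scope.

(* Parities live in Z_2, encoded as bool (false = 0, true = 1; addition = addb,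
   product = andb).  The sign (-1)^p in the ground field: *)
Definition sgn (K : ringType) (p : bool) : K := (-1) ^+ p.

(* A super vector space P = P_0 (+) P_1 is modelled as the product V0 * V1.
   [homog p x] : x is homogeneous of parity p, i.e. x lies in P_p. *)
Definition homog (K : ringType) (V0 V1 : lmodType K) (p : bool) (x : V0 * V1) : Prop :=
  if p then x.1 = 0 else x.2 = 0.

Record transposed_Poisson_superalgebra (K : fieldType) (V0 V1 : lmodType K)
    (mul br : V0 * V1 -> V0 * V1 -> V0 * V1) : Prop := {
  mul_linl : forall (a : K) x y z, mul (a *: x + y) z = a *: mul x z + mul y z;
  mul_linr : forall (a : K) x y z, mul z (a *: x + y) = a *: mul z x + mul z y;
  br_linl : forall (a : K) x y z, br (a *: x + y) z = a *: br x z + br y z;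
  br_linr : forall (a : K) x y z, br z (a *: x + y) = a *: br z x + br z y;
  mul_homog : forall p q x y, homog p x -> homog q y -> homog (p (+) q) (mul x y);
  br_homog : forall p q x y, homog p x -> homog q y -> homog (p (+) q) (br x y);
  mul_supercomm : forall p q x y, homog p x -> homog q y ->
      mul x y = sgn K (p && q) *: mul y x;
  mul_assoc : forall x y z, mul (mul x y) z = mul x (mul y z);
  br_superanti : forall p q x y, homog p x -> homog q y ->
      br x y = - (sgn K (p && q) *: br y x);
  br_superjacobi : forall p q r x y z, homog p x -> homog q y -> homog r z ->
      sgn K (p && r) *: br x (br y z) + sgn K (q && p) *: br y (br z x)
      + sgn K (r && q) *: br z (br x y) = 0;
  tp_rule : forall p q r x y z, homog p x -> homog q y -> homog r z ->
      2 *: mul z (br x y) = br (mul z x) y + sgn K (p && r) *: br x (mul z y)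
}.

Record even_derivation (K : fieldType) (V0 V1 : lmodType K)
    (br : V0 * V1 -> V0 * V1 -> V0 * V1) (D : V0 * V1 -> V0 * V1) : Prop := {
  der_lin : forall (a : K) x y, D (a *: x + y) = a *: D x + D y;
  der_even : forall p x, homog p x -> homog p (D x);
  der_leibniz : forall p q x y, homog p x -> homog q y ->
      D (br x y) = br (D x) y + br x (D y)
}.

(* Over a field of characteristic not 2, the graded cyclic sum of x.[y,z]
   vanishes in a transposed Poisson superalgebra: the transposed Leibniz rule,
   rewritten with super(anti)commutativity, gives
   2 x.[y,z] = [x.y, z] - (-1)^((|x|+|y|)|z|) [z.x, y], and these terms cancel
   around the cycle.  Expanding D[y,z] = [Dy,z] + [y,Dz] splits the left-hand
   side of the theorem into the three cyclic sums for (Dx,Dy,z), (Dx,y,Dz) and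
   (x,Dy,Dz). *)
From HB Require Import structures.
From mathcomp Require Import all_boot all_order all_algebra.
Import Order.TTheory GRing.Theory Num.Theory.
Local Open Scope ring_scope.

Set Implicit Arguments.
Unset Strict Implicit.

Lemma sgn_addb (K : nzRingType) (a b : bool) : sgn K (a (+) b) = sgn K a * sgn K b.
Proof. exact: signr_addb. Qed.

Section CyclicSum.

Variables (K : fieldType) (V0 V1 : lmodType K).
Variables (mul br : V0 * V1 -> V0 * V1 -> V0 * V1).
Hypothesis tpP : transposed_Poisson_superalgebra mul br.

Definition mul_br_cyclic_sum (p q r : bool) (x y z : V0 * V1) :=
  mul x (br y z) + sgn K (p && (q (+) r)) *: mul y (br z x)
  + sgn K ((p (+) q) && r) *: mul z (br x y).

Lemma mulDr z x y : mul z (x + y) = mul z x + mul z y.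
Proof. exact: (GRing.semilinear_linear (fun a x y => mul_linr tpP a x y z)).2. Qed.

Lemma brZr z a x : br z (a *: x) = a *: br z x.
Proof. exact: (GRing.semilinear_linear (fun a x y => br_linr tpP a x y z)).1. Qed.

Lemma mul_br_transposed p q r x y z : homog p x -> homog q y -> homog r z ->
  2 *: mul x (br y z) = br (mul x y) z - sgn K ((p (+) q) && r) *: br (mul z x) y.
Proof.
have parity : (q && p) (+) (p && r) (+) (q && (r (+) p)) = (p (+) q) && r
  by case: p; case: q; case: r.
move=> hx hy hz.
rewrite (tp_rule tpP hy hz hx) (mul_supercomm tpP hx hz) brZr.
rewrite (br_superanti tpP hy (mul_homog tpP hz hx)) !scalerN !scalerA -!sgn_addb.
by rewrite parity.
Qed.

Lemma mul_br_cyclic_sum_eq0 p q r x y z : (2 : K) != 0 ->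
  homog p x -> homog q y -> homog r z -> mul_br_cyclic_sum p q r x y z = 0.
Proof.
have parity : ((p (+) q) && r) (+) ((r (+) p) && q) = p && (q (+) r)
  by case: p; case: q; case: r.
move=> two_neq0 hx hy hz.
apply: (scalerI two_neq0); rewrite scaler0 /mul_br_cyclic_sum !scalerDr.
rewrite !(scalerA 2) ![2 * sgn K _]mulrC -!(scalerA _ 2).
rewrite (mul_br_transposed hx hy hz) (mul_br_transposed hy hz hx).
rewrite (mul_br_transposed hz hx hy) !scalerBr !scalerA -!sgn_addb.
have -> : (p && (q (+) r)) (+) ((q (+) r) && p) = false by rewrite andbC addbb.
rewrite parity scale1r.
set U := br (mul x y) z; set V := sgn K _ *: br (mul y z) x.
set W := sgn K _ *: br (mul z x) y.
by rewrite addrAC subrKA addrC subrKA subrr.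
Qed.

End CyclicSum.

Theorem lemma7 (K : numFieldType) (V0 V1 : lmodType K)
    (mul br : V0 * V1 -> V0 * V1 -> V0 * V1) (D : V0 * V1 -> V0 * V1) :
  transposed_Poisson_superalgebra mul br ->
  even_derivation br D ->
  forall (p q r : bool) (x y z : V0 * V1),
    homog p x -> homog q y -> homog r z ->
    mul (D x) (D (br y z))
    + sgn K (p && (q (+) r)) *: mul (D y) (D (br z x))
    + sgn K ((p (+) q) && r) *: mul (D z) (D (br x y))
    + mul x (br (D y) (D z))
    + sgn K (p && (q (+) r)) *: mul y (br (D z) (D x))
    + sgn K ((p (+) q) && r) *: mul z (br (D x) (D y)) = 0.
Proof.
move=> tpP derD p q r x y z hx hy hz.
have hDx := der_even derD hx; have hDy := der_even derD hy.
have hDz := der_even derD hz.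
have two_neq0 : (2 : K) != 0 by rewrite pnatr_eq0.
transitivity (mul_br_cyclic_sum mul br p q r (D x) (D y) z
  + mul_br_cyclic_sum mul br p q r (D x) y (D z)
  + mul_br_cyclic_sum mul br p q r x (D y) (D z)).
  rewrite /mul_br_cyclic_sum (der_leibniz derD hy hz) (der_leibniz derD hz hx).
  rewrite (der_leibniz derD hx hy) !(mulDr tpP) !scalerDr.
  by rewrite (AC ((((2*2)*2)*1)*1*1) (((1*4*9)*(2*8*5))*(7*3*6))).
by rewrite !(mul_br_cyclic_sum_eq0 tpP) // !addr0.
Qed.
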